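(* Under the hypotheses of the following setting — $S$ semibounded in $\mathfrak H$ with lower bound $\gamma$, $c\le\gamma$, $Q_c$ and $Q_c'=VQ_c$ representing maps for $\mathfrak t(S)-c$ with $V$ a partial isometry from $\overline{\mathrm{ran}}\,Q_c$ onto $\overline{\mathrm{ran}}\,Q_c'$, and $J_c,J_c'$ their companion relations — one has $$J_c'(J_c')^*=J_c'((J_c')^* )_{\rm reg}=J_c(J_c^* )_{\rm reg}=J_cJ_c^*,$$ $$(J_c')^{**}(J_c')^*=(((J_c')^* )_{\rm reg})^*((J_c')^* )_{\rm reg}=((J_c^* )_{\rm reg})^*(J_c^* )_{\rm reg}=J_c^{**}J_c^*.$$
   Context: Linear relations are linear subspaces $T\subset\mathfrak H\times\mathfrak K$; $T^*=\{\{h,k\}:(k,f)=(h,g)\ \forall\{f,g\}\in T\}$; $T^{**}$ is the closure; $RT=\{\{f,h\}:\exists g,\{f,g\}\in T,\{g,h\}\in R\}$. For a closed relation $T$, $T_{\rm reg}=\{\{f,(I-\pi)g\}:\{f,g\}\in T\}$ with $\pi$ the orthogonal projection onto $\mathrm{mul}\,T=\{g:\{0,g\}\in T\}$. $S$ semibounded with lower bound $\gamma$: $\gamma$ is the supremum of $c$ with $(\varphi',\varphi)\ge c\|\varphi\|^2$ on $S$; $\mathfrak t(S)[\varphi,\psi]=(\varphi',\psi)$ on $\mathrm{dom}\,S$. A representing map for $\mathfrak t(S)-c$ is a linear operator $Q_c$ into a Hilbert space, $\mathrm{dom}\,Q_c=\mathrm{dom}\,S$, with $\mathfrak t(S)[\varphi,\psi]=c(\varphi,\psi)+(Q_c\varphi,Q_c\psi)$;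 companion relation $J_c=\{\{Q_c\varphi,\varphi'-c\varphi\}:\{\varphi,\varphi'\}\in S\}$. *)

From mathcomp Require Import all_boot all_order all_algebra.
From mathcomp Require Import reals complex classical_sets.
Set Implicit Arguments. Unset Strict Implicit. Unset Printing Implicit Defensive.
Import Order.TTheory GRing.Theory Num.Theory.
Local Open Scope ring_scope.
Local Open Scope complex_scope.
Local Open Scope classical_set_scope.

Section Hilbert.
Variable R : realType.
Local Notation C := (R[i]).

Definition inner_product (V : lmodType C) (d : V -> V -> C) : Prop :=
  [/\ (forall (a : C) (x y z : V), d (a *: x + y) z = a * d x z + d y z),
      (forall x y : V, d y x = (d x y)^*),
      (forall x : V, 0 <= d x x) &
      (forall x : V, d x x = 0 -> x = 0)].

Definition complete_ip (V : lmodType C) (d : V -> V -> C) : Prop :=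
  forall u : nat -> V,
    (forall e : R, 0 < e -> exists N : nat, forall m n : nat, (N <= m)%N -> (N <= n)%N ->
        d (u m - u n) (u m - u n) < e%:C) ->
    exists l : V, forall e : R, 0 < e -> exists N : nat, forall n : nat, (N <= n)%N ->
        d (u n - l) (u n - l) < e%:C.

Definition hilbert (V : lmodType C) (d : V -> V -> C) : Prop :=
  inner_product d /\ complete_ip d.

Definition nclosure (V : lmodType C) (d : V -> V -> C) (A : set V) : set V :=
  [set x | forall e : R, 0 < e -> exists2 a, A a & d (x - a) (x - a) < e%:C].

Definition orth_to (V : lmodType C) (d : V -> V -> C) (A : set V) (x : V) : Prop :=
  forall a, A a -> d x a = 0.

Definition subspace (V : lmodType C) (A : set V) : Prop :=
  A 0 /\ forall (a : C) x y, A x -> A y -> A (a *: x + y).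

Definition linrel (H K : lmodType C) (T : set (H * K)) : Prop := subspace T.

Definition rdom (H K : Type) (T : set (H * K)) : set H :=
  [set f | exists g, T (f, g)].
Definition rmul (H K : lmodType C) (T : set (H * K)) : set K := [set g | T (0, g)].
Arguments rmul {H K} T.

Definition adj (H K : lmodType C) (dH : H -> H -> C) (dK : K -> K -> C)
  (T : set (H * K)) : set (K * H) :=
  [set hk | forall f g, T (f, g) -> dH hk.2 f = dK hk.1 g].

Definition rcomp (H K L : Type) (Rr : set (K * L)) (T : set (H * K)) : set (H * L) :=
  [set fh | exists g, T (fh.1, g) /\ Rr (g, fh.2)].

(* orthogonal projection onto a closed subspace M, written out:
   p = pi g  iff  p in M and g - p is orthogonal to M *)
Definition is_orth_proj (V : lmodType C) (d : V -> V -> C) (M : set V) (g p : V) : Prop :=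
  M p /\ orth_to d M (g - p).

(* regular part T_reg = {(f, (I - pi) g) : (f,g) in T}, pi = orthogonal
   projection onto mul T *)
Definition rreg (H K : lmodType C) (dK : K -> K -> C) (T : set (H * K)) : set (H * K) :=
  [set fh | exists g, T (fh.1, g) /\ is_orth_proj dK (rmul T) g (g - fh.2)].

Definition lower_bounds (H : lmodType C) (dH : H -> H -> C) (S : set (H * H)) : set R :=
  [set c | forall phi phi', S (phi, phi') -> c%:C * dH phi phi <= dH phi' phi].

Definition semibounded_lb (H : lmodType C) (dH : H -> H -> C) (S : set (H * H)) (gamma : R)
  : Prop :=
  (exists c, lower_bounds dH S c) /\
  (forall c, lower_bounds dH S c -> c <= gamma) /\
  (forall e : R, 0 < e -> exists2 c, lower_bounds dH S c & gamma - e < c).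

(* Q : H -> G is a representing map for t(S) - c: a linear operator with
   domain dom S (only its values on dom S are relevant) such that
   t(S)[phi,psi] = (phi', psi) = c (phi,psi) + (Q phi, Q psi). *)
Definition representing_map (H G : lmodType C) (dH : H -> H -> C) (dG : G -> G -> C)
  (S : set (H * H)) (c : R) (Q : H -> G) : Prop :=
  (forall (a : C) x y, rdom S x -> rdom S y -> Q (a *: x + y) = a *: Q x + Q y) /\
  (forall phi phi' psi, S (phi, phi') -> rdom S psi ->
     dH phi' psi = c%:C * dH phi psi + dG (Q phi) (Q psi)).

Definition companion (H G : lmodType C) (S : set (H * H)) (c : R) (Q : H -> G)
  : set (G * H) :=
  [set qh | exists phi phi', [/\ S (phi, phi'), qh.1 = Q phi & qh.2 = phi' - c%:C *: phi]].

Definition qran (H G : Type) (S : set (H * H)) (Q : H -> G) : set G := Q @` rdom S.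

Definition partial_isometry (G G' : lmodType C) (dG : G -> G -> C) (dG' : G' -> G' -> C)
  (M : set G) (N : set G') (V : G -> G') : Prop :=
  [/\ (forall (a : C) x y, V (a *: x + y) = a *: V x + V y),
      (forall x, M x -> dG' (V x) (V x) = dG x x),
      (forall x, orth_to dG M x -> V x = 0) &
      (forall y, N y <-> exists2 x, M x & V x = y)].

End Hilbert.

From mathcomp Require Import all_boot all_order all_algebra.
From mathcomp Require Import reals complex classical_sets boolp.
From mathcomp Require Import ring lra.
Import Order.TTheory GRing.Theory Num.Theory.
Local Open Scope ring_scope.
Local Open Scope complex_scope.
Local Open Scope classical_set_scope.
Set Implicit Arguments. Unset Strict Implicit.

(* The outer identities hold for every relation J between Hilbert spaces: the
   middle vectors of J J* lie in dom J, which is orthogonal to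
   mul J* = (dom J)^⊥, and those of J** J* lie in the closure of dom J;
   conversely, splitting a vector along the closed subspace mul J* turns
   elements of J* into elements of its regular part.  The middle identities
   hold because both products only see the Gram data of the representing map:
   (Q_c φ, Q_c ψ) = t(S)[φ, ψ] - c (φ, ψ) is the same for Q_c and Q_c', and,
   by polarization, V is unitary from the closure of ran Q_c onto that of
   ran Q_c', so it transports J_c** J_c* to J_c'** J_c'*.  Orthogonal
   projections come from a minimizing sequence, made Cauchy by the
   parallelogram law. *)

Lemma eq0_sqr_small (R : realFieldType) (z : R) :
  (forall e, 0 < e -> z ^+ 2 < e) -> z = 0.
Proof.
move=> small; apply/eqP; apply/negPn/negP => z0.
have z2 : 0 < z ^+ 2 by rewrite lt_def sqrf_eq0 z0 sqr_ge0.
by have := small _ z2; rewrite ltxx.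
Qed.

Lemma invSn_lt (R : archiFieldType) (e : R) :
  0 < e -> exists N, forall n, (N <= n)%N -> n.+1%:R^-1 < e.
Proof.
move=> e0; have ei : 0 < e^-1 by rewrite invr_gt0.
exists (Num.bound e^-1) => n le_n.
rewrite invf_plt ?posrE ?ltr0Sn //; apply: (lt_le_trans (archi_boundP (ltW ei))).
by rewrite ler_nat; apply: leqW.
Qed.

(* Plug in [t = b / (N + 1)]. *)
Lemma sqr_le_of_quadratic (R : realFieldType) (b eps N : R) : 0 <= N ->
  (forall t, 2 * t * b <= eps + t ^+ 2 * N) -> b ^+ 2 <= eps * (N + 1).
Proof.
move=> N0 quad; have N1 : 0 < N + 1 by lra.
set s := (N + 1)^-1.
have s0 : 0 < s by rewrite invr_gt0.
have sN : s * N = 1 - s by rewrite -[1](mulVf (lt0r_neq0 N1)) -/s; ring.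
have := quad (b * s).
have -> : 2 * (b * s) * b = 2 * (b ^+ 2 * s) by ring.
have -> : (b * s) ^+ 2 * N = b ^+ 2 * s * (s * N) by ring.
rewrite sN => h.
have bs : b ^+ 2 * s <= eps by have := sqr_ge0 b; nra.
have -> : b ^+ 2 = b ^+ 2 * s * (N + 1) by rewrite -mulrA mulVf ?mulr1 // lt0r_neq0.
by rewrite ler_pM2r.
Qed.

Section InnerProduct.
Variable R : realType.
Local Notation C := R[i].
Variables (V : lmodType C) (d : V -> V -> C).
Hypothesis hd : inner_product d.

Lemma ipDl x y z : d (x + y) z = d x z + d y z.
Proof. by case: hd => lin _ _ _; rewrite -[x]scale1r lin mul1r scale1r. Qed.

Lemma ip0l z : d 0 z = 0.
Proof. by apply: (addrI (d 0 z)); rewrite -ipDl !addr0. Qed.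

Lemma ipZl a x z : d (a *: x) z = a * d x z.
Proof. by case: hd => lin _ _ _; rewrite -[a *: x]addr0 lin ip0l addr0. Qed.

Lemma ipNl x z : d (- x) z = - d x z.
Proof. by rewrite -scaleN1r ipZl mulN1r. Qed.

Lemma ipBl x y z : d (x - y) z = d x z - d y z.
Proof. by rewrite ipDl ipNl. Qed.

Lemma ipC x y : d y x = (d x y)^*.
Proof. by case: hd. Qed.

Lemma ip0r z : d z 0 = 0.
Proof. by rewrite ipC ip0l conjc0. Qed.

Lemma ipDr x y z : d z (x + y) = d z x + d z y.
Proof. by rewrite (ipC (x + y)) (ipC x) (ipC y) ipDl rmorphD. Qed.

Lemma ipZr a x z : d z (a *: x) = a^* * d z x.
Proof. by rewrite (ipC (a *: x)) (ipC x) ipZl rmorphM. Qed.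

Lemma ipNr x z : d z (- x) = - d z x.
Proof. by rewrite (ipC (- x)) (ipC x) ipNl rmorphN. Qed.

Lemma ipBr x y z : d z (x - y) = d z x - d z y.
Proof. by rewrite ipDr ipNr. Qed.

Lemma ip_polar x y : 2 * d x y =
  d (x + y) (x + y) - d x x - d y y
  + 'i%C * (d (x + 'i%C *: y) (x + 'i%C *: y) - d x x - d y y).
Proof.
have conji : Num.conj ('i%C : C) = - 'i%C by apply/eqP; rewrite eq_complex /= oppr0 !eqxx.
have ii : 'i%C * 'i%C = -1 :> C by rewrite -expr2 sqr_i.
rewrite !(ipDl, ipDr, ipZl, ipZr) conji; move: ii; set i := 'i%C => ii.
symmetry; transitivity (2 * d x y + (i * i + 1) * (d y x - d x y - i * d y y)).
  by ring.
by rewrite ii addNr mul0r addr0.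
Qed.

Lemma orth_ipl (A : set V) b p z : orth_to d A (b - p) -> A z -> d p z = d b z.
Proof. by move=> bp Az; apply/eqP; rewrite eq_sym -subr_eq0 -ipBl bp. Qed.

Lemma orth_ipr (A : set V) b p z : orth_to d A (b - p) -> A z -> d z p = d z b.
Proof. by move=> bp Az; rewrite ipC (ipC b) (orth_ipl bp Az). Qed.

Lemma orth_subspace (A : set V) : subspace (orth_to d A).
Proof.
split=> [a _|s x y ox oy a Aa]; first exact: ip0l.
by rewrite ipDl ipZl ox // oy // mulr0 addr0.
Qed.

Definition re_ip x y := complex.Re (d x y).
Definition sqnorm x := re_ip x x.

Lemma ip_sqnorm x : d x x = (sqnorm x)%:C.
Proof.
case: hd => _ _ ge0 _; rewrite /sqnorm /re_ip.
by have := ger0_Im (ge0 x); case: (d x x) => a b /= ->.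
Qed.

Lemma sqnorm_ge0 x : 0 <= sqnorm x.
Proof. by case: hd => _ _ ge0 _; have := ge0 x; rewrite ip_sqnorm lecR. Qed.

Lemma sqnorm_eq0 x : sqnorm x = 0 -> x = 0.
Proof. by case: hd => _ _ _ eq0 x0; apply: eq0; rewrite ip_sqnorm x0. Qed.

Lemma ip_ltcR x e : (d x x < e%:C) = (sqnorm x < e).
Proof. by rewrite ip_sqnorm ltcR. Qed.

Lemma re_ipC x y : re_ip x y = re_ip y x.
Proof. by rewrite /re_ip ipC; case: (d y x). Qed.

Lemma re_ipDl x y z : re_ip (x + y) z = re_ip x z + re_ip y z.
Proof. by rewrite /re_ip ipDl raddfD. Qed.

Lemma re_ipBl x y z : re_ip (x - y) z = re_ip x z - re_ip y z.
Proof. by rewrite /re_ip ipBl raddfB. Qed.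

Lemma re_ipZl (r : R) x z : re_ip (r%:C *: x) z = r * re_ip x z.
Proof. by rewrite /re_ip ipZl; case: (d x z) => a b /=; rewrite !mul0r subr0. Qed.

Lemma re_ipDr x y z : re_ip z (x + y) = re_ip z x + re_ip z y.
Proof. by rewrite re_ipC re_ipDl !(re_ipC z). Qed.

Lemma re_ipBr x y z : re_ip z (x - y) = re_ip z x - re_ip z y.
Proof. by rewrite re_ipC re_ipBl !(re_ipC z). Qed.

Lemma re_ipZr (r : R) x z : re_ip z (r%:C *: x) = r * re_ip z x.
Proof. by rewrite re_ipC re_ipZl re_ipC. Qed.

Lemma ip_eq0 x y : re_ip x y = 0 -> re_ip x ('i%C *: y) = 0 -> d x y = 0.
Proof.
rewrite /re_ip ipZr; case: (d x y) => a b /= ->.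
by rewrite mul0r mulN1r opprK add0r => ->.
Qed.

Lemma sqnormN x : sqnorm (- x) = sqnorm x.
Proof. by rewrite /sqnorm /re_ip ipNl ipNr opprK. Qed.

Lemma sqnormD x y : sqnorm (x + y) = sqnorm x + 2 * re_ip x y + sqnorm y.
Proof. by rewrite /sqnorm !(re_ipDl, re_ipDr) (re_ipC y x); ring. Qed.

Lemma sqnormB x y : sqnorm (x - y) = sqnorm x - 2 * re_ip x y + sqnorm y.
Proof. by rewrite /sqnorm !(re_ipBl, re_ipBr) (re_ipC y x); ring. Qed.

Lemma sqnormBZ x (r : R) y :
  sqnorm (x - r%:C *: y) = sqnorm x - 2 * r * re_ip x y + r ^+ 2 * sqnorm y.
Proof. by rewrite /sqnorm !(re_ipBl, re_ipBr, re_ipZl, re_ipZr) (re_ipC y x); ring. Qed.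

Lemma sqnormZ a x :
  sqnorm (a *: x) = (complex.Re a ^+ 2 + complex.Im a ^+ 2) * sqnorm x.
Proof. by rewrite {1}/sqnorm /re_ip ipZl ipZr ip_sqnorm; case: a => a b /=; ring. Qed.

Lemma sqnormD_le x y : sqnorm (x + y) <= 2 * sqnorm x + 2 * sqnorm y.
Proof. by have := sqnorm_ge0 (x - y); rewrite sqnormB sqnormD; lra. Qed.

Lemma sqnorm_parallelogram x a b :
  sqnorm (a - b) + 4 * sqnorm (x - 2^-1%:C *: (a + b))
  = 2 * sqnorm (x - a) + 2 * sqnorm (x - b).
Proof.
rewrite /sqnorm !(re_ipBl, re_ipBr, re_ipDl, re_ipDr, re_ipZl, re_ipZr).
by rewrite (re_ipC a x) (re_ipC b x) (re_ipC b a); field.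
Qed.

Lemma re_ip_sqr_le x y : re_ip x y ^+ 2 <= sqnorm x * sqnorm y.
Proof.
have [y0|ny0] := eqVneq (sqnorm y) 0.
  by rewrite y0 (sqnorm_eq0 y0) /re_ip ip0r /= expr0n /= mulr0.
have yp : 0 < sqnorm y by rewrite lt_def ny0 sqnorm_ge0.
have := sqnorm_ge0 (x - (re_ip x y / sqnorm y)%:C *: y).
rewrite sqnormBZ => h.
have e : re_ip x y / sqnorm y * sqnorm y = re_ip x y by rewrite mulfVK.
nra.
Qed.

Lemma complete_sqnorm : complete_ip d -> forall u : nat -> V,
  (forall e, 0 < e -> exists N, forall m n, (N <= m)%N -> (N <= n)%N ->
     sqnorm (u m - u n) < e) ->
  exists l, forall e, 0 < e -> exists N, forall n, (N <= n)%N -> sqnorm (u n - l) < e.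
Proof.
move=> cd u cauchy.
have [l lim] : exists l, forall e, 0 < e -> exists N, forall n, (N <= n)%N ->
    d (u n - l) (u n - l) < e%:C.
  by apply: cd => e /cauchy [N ltN]; exists N => m n mN nN; rewrite ip_ltcR ltN.
by exists l => e /lim [N ltN]; exists N => n nN; rewrite -ip_ltcR ltN.
Qed.

Lemma nclosureP A x :
  nclosure d A x <-> forall e, 0 < e -> exists2 a, A a & sqnorm (x - a) < e.
Proof.
split=> cl e /cl [a Aa lt]; exists a => //; first by rewrite -ip_ltcR.
by rewrite ip_ltcR.
Qed.

Definition nclosed (A : set V) := nclosure d A `<=` A.

Lemma sub_nclosure A : A `<=` nclosure d A.
Proof.
move=> x Ax; apply/nclosureP => e e0; exists x => //.
by rewrite subrr /sqnorm /re_ip ip0l.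
Qed.

Lemma nclosure_closed A : nclosed (nclosure d A).
Proof.
move=> x /nclosureP clx; apply/nclosureP => e e0.
have e4 : 0 < e / 4 by rewrite divr_gt0.
have [a /nclosureP cla lt1] := clx _ e4.
have [b Ab lt2] := cla _ e4.
exists b => //; have := sqnormD_le (x - a) (a - b).
by rewrite addrA subrK; lra.
Qed.

Lemma nclosure_subspace A : subspace A -> subspace (nclosure d A).
Proof.
move=> [A0 AZD]; split; first exact: sub_nclosure.
move=> a x y /nclosureP clx /nclosureP cly; apply/nclosureP => e e0.
set k := complex.Re a ^+ 2 + complex.Im a ^+ 2.
have k0 : 0 <= k by rewrite addr_ge0 // sqr_ge0.
have k1 : 0 < 4 * (k + 1) by lra.
have [x' Ax' ltx] := clx _ (divr_gt0 e0 k1).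
have [y' Ay' lty] := cly _ (divr_gt0 e0 k1).
exists (a *: x' + y'); first exact: AZD.
have -> : a *: x + y - (a *: x' + y') = a *: (x - x') + (y - y').
  by rewrite scalerBr opprD addrACA.
have := sqnormD_le (a *: (x - x')) (y - y'); rewrite sqnormZ -/k.
move: ltx lty; rewrite !ltr_pdivlMr //.
by have := sqnorm_ge0 (x - x'); have := sqnorm_ge0 (y - y'); nra.
Qed.

Lemma re_ip_nclosure A y x : nclosure d A x ->
  (forall a, A a -> re_ip a y = 0) -> re_ip x y = 0.
Proof.
move=> /nclosureP clx Ay0; apply: eq0_sqr_small => e e0.
have y1 : 0 < sqnorm y + 1 by have := sqnorm_ge0 y; lra.
have [a Aa lt] := clx _ (divr_gt0 e0 y1).
have -> : re_ip x y = re_ip (x - a) y by rewrite re_ipBl (Ay0 a Aa) subr0.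
have := re_ip_sqr_le (x - a) y; move: lt; rewrite ltr_pdivlMr //.
by have := sqnorm_ge0 (x - a); have := sqnorm_ge0 y; nra.
Qed.

Lemma nclosed_orth A : nclosed (orth_to d A).
Proof.
move=> x clx a Aa; apply: ip_eq0; apply: (re_ip_nclosure clx) => b ob.
  by rewrite /re_ip ob.
by rewrite /re_ip ipZr ob // mulr0.
Qed.

Section Projection.
Variable M : set V.
Hypotheses (sM : subspace M) (cM : nclosed M).
Variable x : V.

Let dist := inf [set sqnorm (x - m) | m in M].

Let dist_le m : M m -> dist <= sqnorm (x - m).
Proof.
move=> Mm; apply: ge_inf; last by exists m.
by exists 0 => _ [m' _ <-]; exact: sqnorm_ge0.
Qed.

Let minimizing_seq : exists u : nat -> V,
  forall n, M (u n) /\ sqnorm (x - u n) < dist + n.+1%:R^-1.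
Proof.
have hinf : has_inf [set sqnorm (x - m) | m in M].
  split; first by exists (sqnorm (x - 0)), 0 => //; case: sM.
  by exists 0 => _ [m _ <-]; exact: sqnorm_ge0.
have near n : exists m, M m /\ sqnorm (x - m) < dist + n.+1%:R^-1.
  have n0 : 0 < n.+1%:R^-1 :> R by rewrite invr_gt0 ltr0Sn.
  have [_ [m Mm <-] lt] := inf_adherent n0 hinf.
  by exists m.
by have [u hu] := choice near; exists u.
Qed.

Section MinimizingSequence.
Variable u : nat -> V.
Hypothesis hu : forall n, M (u n) /\ sqnorm (x - u n) < dist + n.+1%:R^-1.

Let MD a b : M a -> M b -> M (a + b).
Proof. by case: sM => _ AZD Ma Mb; rewrite -[a]scale1r; apply: AZD. Qed.

Let MZ r a : M a -> M (r *: a).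
Proof. by case: sM => _ AZD Ma; rewrite -[r *: a]addr0; apply: AZD; case: sM. Qed.

Lemma minimizing_cauchy n k : sqnorm (u n - u k) < 2 * n.+1%:R^-1 + 2 * k.+1%:R^-1.
Proof.
have := sqnorm_parallelogram x (u n) (u k).
have := dist_le (MZ 2^-1%:C (MD (hu n).1 (hu k).1)).
have := (hu n).2; have := (hu k).2.
by set en := n.+1%:R^-1; set ek := k.+1%:R^-1; lra.
Qed.

Let minimizing_orth n m : M m ->
  re_ip (x - u n) m ^+ 2 <= n.+1%:R^-1 * (sqnorm m + 1).
Proof.
move=> Mm; apply: sqr_le_of_quadratic; first exact: sqnorm_ge0.
move=> t; have := dist_le (MD (hu n).1 (MZ t%:C Mm)).
rewrite opprD addrA sqnormBZ; have := (hu n).2.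
by set en := n.+1%:R^-1; lra.
Qed.

Lemma minimizing_limit_proj p :
  (forall e, 0 < e -> exists N, forall n, (N <= n)%N -> sqnorm (u n - p) < e) ->
  is_orth_proj d M x p.
Proof.
move=> lim; split.
  apply: cM; apply/nclosureP => e /lim [N ltN]; exists (u N); first exact: (hu N).1.
  by rewrite -sqnormN opprB ltN.
suff re0 m : M m -> re_ip (x - p) m = 0.
  by move=> m Mm; apply: ip_eq0; apply: re0 => //; apply: MZ.
move=> Mm; apply: eq0_sqr_small => e e0.
have k : 0 < 4 * (sqnorm m + 1) by have := sqnorm_ge0 m; lra.
have [N1 lt1] := lim _ (divr_gt0 e0 k).
have [N2 lt2] := invSn_lt (divr_gt0 e0 k).
set n := maxn N1 N2.
have := lt1 n (leq_maxl _ _); have := lt2 n (leq_maxr _ _).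
rewrite !ltr_pdivlMr //.
have := minimizing_orth n Mm; have := re_ip_sqr_le (u n - p) m.
have -> : re_ip (x - p) m = re_ip (x - u n) m + re_ip (u n - p) m.
  by rewrite -re_ipDl addrA subrK.
set a := re_ip (x - u n) m; set b := re_ip (u n - p) m.
have := sqr_ge0 (a - b); have := sqnorm_ge0 m; have := sqnorm_ge0 (u n - p).
by set en := n.+1%:R^-1; nra.
Qed.

End MinimizingSequence.

Lemma orth_proj_exists : complete_ip d -> exists p, is_orth_proj d M x p.
Proof.
move=> cd; have [u hu] := minimizing_seq.
have cauchy e : 0 < e -> exists N, forall m n, (N <= m)%N -> (N <= n)%N ->
    sqnorm (u m - u n) < e.
  move=> e0; have [N ltN] := invSn_lt (divr_gt0 e0 (ltr0n _ 4)).
  exists N => m n mN nN; have := minimizing_cauchy hu m n.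
  have := ltN _ mN; have := ltN _ nN.
  by set em := m.+1%:R^-1; set en := n.+1%:R^-1; lra.
have [p lim] := complete_sqnorm cd cauchy.
by exists p; apply: minimizing_limit_proj lim.
Qed.

End Projection.

End InnerProduct.

Section Isometry.
Variable R : realType.
Local Notation C := R[i].
Variables (V1 V2 : lmodType C) (d1 : V1 -> V1 -> C) (d2 : V2 -> V2 -> C).
Hypotheses (h1 : inner_product d1) (h2 : inner_product d2).
Variables (F : V1 -> V2) (A : set V1).
Hypotheses (linF : forall (a : C) x y, F (a *: x + y) = a *: F x + F y)
  (sA : subspace A) (normF : forall x, A x -> d2 (F x) (F x) = d1 x x).

Lemma isometry_ip x y : A x -> A y -> d2 (F x) (F y) = d1 x y.
Proof.
move=> Ax Ay.
have Fxy a : F (x + a *: y) = F x + a *: F y by rewrite addrC linF addrC.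
have Axy a : A (x + a *: y) by rewrite addrC; case: sA => _; apply.
have FD : F (x + y) = F x + F y by have := Fxy 1; rewrite !scale1r.
have AD : A (x + y) by have := Axy 1; rewrite scale1r.
have AI := Axy 'i%C.
apply: (@mulfI _ 2); first by rewrite pnatr_eq0.
by rewrite (ip_polar h2) (ip_polar h1) -FD -Fxy !normF.
Qed.

End Isometry.

Section Adjoint.
Variable R : realType.
Local Notation C := R[i].
Variables (H K : lmodType C) (dH : H -> H -> C) (dK : K -> K -> C).
Hypotheses (iH : inner_product dH) (iK : inner_product dK).

Lemma adjS (T T' : set (H * K)) : T `<=` T' -> adj dH dK T' `<=` adj dH dK T.
Proof. by move=> TT' [k h] /= adjT f g Tfg; apply: adjT; apply: TT'. Qed.

Lemma sub_adjadj (T : set (H * K)) : T `<=` adj dK dH (adj dH dK T).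
Proof.
move=> [f g] Tfg k h adjT /=.
by rewrite (ipC iK) -(adjT _ _ Tfg) -(ipC iH).
Qed.

Lemma rmul_adj (T : set (H * K)) : rmul (adj dH dK T) = orth_to dH (rdom T).
Proof.
apply/seteqP; split=> k adjT.
  by move=> f [g Tfg]; have := adjT _ _ Tfg; rewrite /= (ip0l iK).
by move=> f g Tfg /=; rewrite (ip0l iK); apply: adjT; exists g.
Qed.

Lemma adj_orth_rmul (T : set (H * K)) k h :
  adj dH dK T (k, h) -> orth_to dK (rmul T) k.
Proof. by move=> adjT g Tg; have := adjT _ _ Tg; rewrite /= (ip0r iH). Qed.

Lemma adj_subr (T : set (H * K)) k h p :
  adj dH dK T (k, h) -> rmul (adj dH dK T) p -> adj dH dK T (k, h - p).
Proof.
rewrite rmul_adj => adjT op f g Tfg /=.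
by rewrite (ipBl iH) (op f) ?subr0; [exact: adjT | exists g].
Qed.

End Adjoint.

Section AdjointRegular.
Variable R : realType.
Local Notation C := R[i].
Variables (H K : lmodType C) (dH : H -> H -> C) (dK : K -> K -> C).
Hypotheses (iH : inner_product dH) (iK : inner_product dK).

Lemma adjadj_nclosure (T : set (H * K)) g k :
  complete_ip dH -> subspace (rdom T) ->
  adj dK dH (adj dH dK T) (g, k) -> nclosure dH (rdom T) g.
Proof.
move=> cH sT adj2T.
have [p [clp op]] := orth_proj_exists iH (nclosure_subspace iH sT)
  (@nclosure_closed _ _ _ iH _) g cH.
have gp : rmul (adj dH dK T) (g - p).
  by rewrite (rmul_adj dH iK) => f Tf; apply: op; apply: sub_nclosure.
have gp0 : dH (g - p) (g - p) = 0.
  by rewrite (ipBl iH) (adj_orth_rmul iK adj2T gp) (ipC iH _ p) (op p clp) conjc0 subrr.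
by case: iH => _ _ _ /(_ _ gp0) /eqP; rewrite subr_eq0 => /eqP ->.
Qed.

Section RegularPart.
Variable T : set (H * K).
Local Notation Ta := (adj dH dK T).

Lemma rreg_adj_sub : rreg dH Ta `<=` Ta.
Proof.
move=> [k h] [g [Tkg [mp _]]].
by have := adj_subr iH iK Tkg mp; rewrite opprB addrC subrK.
Qed.

Lemma rreg_adj_orth k h : rreg dH Ta (k, h) -> orth_to dH (rmul Ta) h.
Proof. by move=> [g [_ [_]]]; rewrite opprB addrC subrK. Qed.

Lemma rreg_adj_of_orth k h : Ta (k, h) -> orth_to dH (rmul Ta) h -> rreg dH Ta (k, h).
Proof.
move=> Tkh oh; exists h; split=> //; rewrite /is_orth_proj subrr subr0; split=> //.
by rewrite (rmul_adj dH iK) => f _; exact: (ip0l iH f).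
Qed.

Lemma rcomp_adj_rreg : rcomp T Ta = rcomp T (rreg dH Ta).
Proof.
apply/seteqP; split=> -[k k'] [h [Tah Thk']]; exists h; split=> //.
  exact/rreg_adj_of_orth/(adj_orth_rmul iK (sub_adjadj iH iK Thk')).
exact: rreg_adj_sub.
Qed.

Lemma rcomp_adjadj_rreg : complete_ip dH ->
  rcomp (adj dK dH Ta) Ta = rcomp (adj dK dH (rreg dH Ta)) (rreg dH Ta).
Proof.
move=> cH; apply/seteqP; split=> -[k k'] [h [Tah adjh]]; exists h; split.
- exact/rreg_adj_of_orth/(adj_orth_rmul iK adjh).
- exact: (adjS rreg_adj_sub adjh).
- exact: rreg_adj_sub.
move=> f g Tfg /=.
have sM : subspace (rmul Ta) by rewrite (rmul_adj dH iK); exact: orth_subspace.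
have cM : nclosed dH (rmul Ta) by rewrite (rmul_adj dH iK); exact: nclosed_orth.
have [p [Mp op]] := orth_proj_exists iH sM cM g cH.
have : rreg dH Ta (f, g - p).
  by exists g; split=> //; rewrite /is_orth_proj opprB addrC subrK.
by move=> /adjh /= ->; rewrite (ipBr iH) (rreg_adj_orth Tah Mp) subr0.
Qed.

End RegularPart.

End AdjointRegular.

Section Companion.
Variable R : realType.
Local Notation C := R[i].
Variables (H : lmodType C) (dH : H -> H -> C) (S : set (H * H)) (c : R).

Lemma representing_map_ip (G1 G2 : lmodType C) (d1 : G1 -> G1 -> C) (d2 : G2 -> G2 -> C)
    (Q1 : H -> G1) (Q2 : H -> G2) :
  representing_map dH d1 S c Q1 -> representing_map dH d2 S c Q2 ->
  forall phi phi' psi, S (phi, phi') -> rdom S psi ->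
  d2 (Q2 phi) (Q2 psi) = d1 (Q1 phi) (Q1 psi).
Proof.
move=> [_ rep1] [_ rep2] phi phi' psi Sphi Spsi.
by apply: (@addrI _ (c%:C * dH phi psi)); rewrite -(rep1 _ _ _ Sphi Spsi) -(rep2 _ _ _ Sphi Spsi).
Qed.

Lemma rcomp_companion_adj (G1 G2 : lmodType C) (d1 : G1 -> G1 -> C) (d2 : G2 -> G2 -> C)
    (Q1 : H -> G1) (Q2 : H -> G2) :
  representing_map dH d1 S c Q1 -> representing_map dH d2 S c Q2 ->
  rcomp (companion S c Q1) (adj d1 dH (companion S c Q1)) =
  rcomp (companion S c Q2) (adj d2 dH (companion S c Q2)).
Proof.
suff sub (G G' : lmodType C) (dG : G -> G -> C) (dG' : G' -> G' -> C) Q Q' :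
    representing_map dH dG S c Q -> representing_map dH dG' S c Q' ->
    rcomp (companion S c Q) (adj dG dH (companion S c Q)) `<=`
    rcomp (companion S c Q') (adj dG' dH (companion S c Q')).
  by move=> rep1 rep2; apply/seteqP; split; apply: sub.
move=> rep rep' [f h] [g [adjQ [phi [phi' [Sphi /= gQ ->]]]]]; subst g.
exists (Q' phi); split; last by exists phi, phi'.
move=> _ _ [psi [psi' [Spsi /= -> ->]]].
rewrite (representing_map_ip rep rep' Sphi); last by exists psi'.
by apply: adjQ; exists psi, psi'.
Qed.

Lemma rdom_companion (G : lmodType C) (Q : H -> G) : rdom (companion S c Q) = qran S Q.
Proof.
apply/seteqP; split=> g.
  by move=> [h [phi [phi' [Sphi /= -> _]]]]; exists phi => //; exists phi'.
by move=> [phi [phi' Sphi] <-]; exists (phi' - c%:C *: phi), phi, phi'.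
Qed.

Lemma subspace_qran (G : lmodType C) (dG : G -> G -> C) (Q : H -> G) :
  linrel S -> representing_map dH dG S c Q -> subspace (qran S Q).
Proof.
move=> [S0 SZD] [linQ _]; have domS0 : rdom S 0 by exists 0.
have Q0 : Q 0 = 0.
  by have := linQ (-1) 0 0 domS0 domS0; rewrite scaler0 addr0 scaleN1r addNr.
split; first by exists 0.
move=> a _ _ [x [x' Sx] <-] [y [y' Sy] <-].
exists (a *: x + y); first by exists (a *: x' + y'); exact: SZD Sx Sy.
by rewrite linQ //; [exists x' | exists y'].
Qed.

End Companion.

Section Transport.
Variable R : realType.
Local Notation C := R[i].
Variables (H G G' : lmodType C).
Variables (dH : H -> H -> C) (dG : G -> G -> C) (dG' : G' -> G' -> C).
Hypotheses (iH : inner_product dH) (hG : hilbert dG) (hG' : hilbert dG').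
Variables (J : set (G * H)) (J' : set (G' * H)) (U : set (G * G')).
Hypotheses (sJ : subspace (rdom J)) (sJ' : subspace (rdom J')).
Local Notation M := (nclosure dG (rdom J)).
Local Notation N := (nclosure dG' (rdom J')).
Hypotheses (U_N : forall m n, U (m, n) -> N n)
  (U_total : forall m, M m -> exists n, U (m, n))
  (U_onto : forall n, N n -> exists m, U (m, n))
  (U_ip : forall m n m' n', U (m, n) -> U (m', n') -> dG' n n' = dG m m')
  (J_U : forall m h, J (m, h) -> exists2 n, U (m, n) & J' (n, h))
  (J'_U : forall n h, J' (n, h) -> exists2 m, U (m, n) & J (m, h)).

Lemma rcomp_adjadj_transport :
  rcomp (adj dH dG (adj dG dH J)) (adj dG dH J) `<=`
  rcomp (adj dH dG' (adj dG' dH J')) (adj dG' dH J').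
Proof.
case: hG hG' => iG cG [iG' cG'] [f h] [g [adjg adj2g]] /=.
have [n Ugn] := U_total (adjadj_nclosure iG iH cG sJ adj2g).
exists n; split.
  by move=> a b /J'_U [m Uma Jmb] /=; rewrite (U_ip Ugn Uma); apply: adjg.
move=> a b' adjb' /=.
have [q [Nq oq]] := orth_proj_exists iG' (nclosure_subspace iG' sJ')
  (@nclosure_closed _ _ _ iG' _) b' cG'.
have [m Umq] := U_onto Nq.
have adjm : adj dG dH J (a, m).
  move=> m' b /J_U [n' Umn' Jn'] /=.
  rewrite -(U_ip Umq Umn') (orth_ipl iG' oq); first exact: adjb'.
  by apply: (sub_nclosure iG'); exists b.
by rewrite (adj2g _ _ adjm) -(U_ip Ugn Umq) (orth_ipr iG' oq (U_N Ugn)).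
Qed.

End Transport.

Section PartialIsometry.
Variable R : realType.
Local Notation C := R[i].
Variables (H G G' : lmodType C).
Variables (dH : H -> H -> C) (dG : G -> G -> C) (dG' : G' -> G' -> C).
Hypotheses (iH : inner_product dH) (hG : hilbert dG) (hG' : hilbert dG').
Variables (S : set (H * H)) (c : R) (Q : H -> G) (V : G -> G').
Hypotheses (linS : linrel S) (hQ : representing_map dH dG S c Q)
  (hQ' : representing_map dH dG' S c (V \o Q))
  (hV : partial_isometry dG dG' (nclosure dG (qran S Q))
          (nclosure dG' (qran S (V \o Q))) V).
Local Notation J := (companion S c Q).
Local Notation J' := (companion S c (V \o Q)).

Lemma rcomp_adjadj_companion :
  rcomp (adj dH dG (adj dG dH J)) (adj dG dH J) =
  rcomp (adj dH dG' (adj dG' dH J')) (adj dG' dH J').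
Proof.
have [iG _] := hG; have [iG' _] := hG'.
have sJ : subspace (rdom J) by rewrite rdom_companion; exact: subspace_qran hQ.
have sJ' : subspace (rdom J') by rewrite rdom_companion; exact: subspace_qran hQ'.
move: hV; rewrite -!(rdom_companion S c) => -[linV normV _ ontoV].
set M := nclosure dG (rdom J).
pose U := [set mn : G * G' | M mn.1 /\ mn.2 = V mn.1].
have ipV m m' : M m -> M m' -> dG' (V m) (V m') = dG m m'.
  move=> Mm Mm'; exact: (isometry_ip iG iG' linV (nclosure_subspace iG sJ) normV Mm Mm').
have J_U m h : J (m, h) -> exists2 n, U (m, n) & J' (n, h).
  move=> [phi [phi' [Sphi]]] /= -> ->; exists (V (Q phi)); last by exists phi, phi'.
  by split=> //; apply: (sub_nclosure iG); exists (phi' - c%:C *: phi), phi, phi'.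
have J'_U n h : J' (n, h) -> exists2 m, U (m, n) & J (m, h).
  move=> [phi [phi' [Sphi]]] /= -> ->; exists (Q phi); last by exists phi, phi'.
  by split=> //; apply: (sub_nclosure iG); exists (phi' - c%:C *: phi), phi, phi'.
apply/seteqP; split.
  apply: (rcomp_adjadj_transport iH hG hG' sJ sJ' (U := U)) => //.
  - by move=> m n; case=> Mm /= ->; apply/ontoV; exists m.
  - by move=> m Mm; exists (V m).
  - by move=> n /ontoV [m Mm <-]; exists m.
  - by move=> m n m' n'; case=> Mm /= ->; case=> Mm' /= ->; apply: ipV.
apply: (rcomp_adjadj_transport iH hG' hG sJ' sJ (U := [set nm | U (nm.2, nm.1)])) => //.
- by move=> n m [].
- by move=> n /ontoV [m Mm <-]; exists m.
- by move=> m Mm; exists (V m).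
- by move=> n m n' m'; case=> Mm /= ->; case=> Mm' /= ->; rewrite ipV.
Qed.

End PartialIsometry.

Unset Implicit Arguments.
Theorem corollary3p3 (R : realType)
  (H : lmodType R[i]) (dH : H -> H -> R[i])
  (G : lmodType R[i]) (dG : G -> G -> R[i])
  (G' : lmodType R[i]) (dG' : G' -> G' -> R[i])
  (hH : hilbert dH) (hG : hilbert dG) (hG' : hilbert dG')
  (S : set (H * H)) (gamma c : R) (Q : H -> G) (V : G -> G')
  (linS : linrel S) (semiS : semibounded_lb dH S gamma) (hc : c <= gamma)
  (hQ : representing_map dH dG S c Q)
  (hV : partial_isometry dG dG' (nclosure dG (qran S Q))
          (nclosure dG' (qran S (V \o Q))) V)
  (hQ' : representing_map dH dG' S c (V \o Q)) :
  let J : set (G * H) := companion S c Q in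
  let J' : set (G' * H) := companion S c (V \o Q) in
  let Js : set (H * G) := adj dG dH J in
  let Js' : set (H * G') := adj dG' dH J' in
  let Jss : set (G * H) := adj dH dG Js in
  let Jss' : set (G' * H) := adj dH dG' Js' in
  let Jsr : set (H * G) := rreg dG Js in
  let Jsr' : set (H * G') := rreg dG' Js' in
  [/\ rcomp J' Js' = rcomp J' Jsr',
      rcomp J' Jsr' = rcomp J Jsr &
      rcomp J Jsr = rcomp J Js] /\
  [/\ rcomp Jss' Js' = rcomp (adj dH dG' Jsr') Jsr',
      rcomp (adj dH dG' Jsr') Jsr' = rcomp (adj dH dG Jsr) Jsr &
      rcomp (adj dH dG Jsr) Jsr = rcomp Jss Js].
Proof.
cbv zeta; have [iH _] := hH; have [iG cG] := hG; have [iG' cG'] := hG'.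
have JJs := rcomp_adj_rreg iG iH (companion S c Q).
have J'J's := rcomp_adj_rreg iG' iH (companion S c (V \o Q)).
have JssJs := rcomp_adjadj_rreg iG iH (companion S c Q) cG.
have J'ssJ's := rcomp_adjadj_rreg iG' iH (companion S c (V \o Q)) cG'.
have JJs_J'J's := rcomp_companion_adj hQ hQ'.
have JssJs_J'ssJ's := rcomp_adjadj_companion iH hG hG' linS hQ hQ' hV.
split; split.
- exact: J'J's.
- by rewrite -J'J's -JJs_J'J's JJs.
- by rewrite JJs.
- exact: J'ssJ's.
- by rewrite -J'ssJ's -JssJs_J'ssJ's JssJs.
- by rewrite JssJs.
Qed.
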